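(* Let $m\ge 0$ and $Z\ge 1$ be integers and let $\gamma,\kappa\ge 2$ be integers with $\gamma\kappa>\gamma+\kappa$. Consider pairs $(\mathbf P,\mathbf L)$ with $\mathbf P\in\{0,\ldots,m\}^{\gamma\times\kappa}$ and $\mathbf L\in\mathbb{Z}_Z^{\gamma\times\kappa}$. For $1\le i_1<i_2\le\gamma$ and $1\le j_1<j_2\le\kappa$, call $(i_1,i_2,j_1,j_2)$ active under $(\mathbf P,\mathbf L)$ if $\mathbf P(i_1,j_1)+\mathbf P(i_2,j_2)=\mathbf P(i_1,j_2)+\mathbf P(i_2,j_1)$ and $\mathbf L(i_1,j_1)+\mathbf L(i_2,j_2)\equiv\mathbf L(i_1,j_2)+\mathbf L(i_2,j_1)\pmod Z$. Call two pairs $(\mathbf P,\mathbf L)$, $(\mathbf P',\mathbf L')$ equivalent if there exist a permutation $\pi_r$ of $[\gamma]$ and a permutation $\pi_c$ of $[\kappa]$ such that $\mathbf P'(\pi_r(i),\pi_c(j))=\mathbf P(i,j)$ and $\mathbf L'(\pi_r(i),\pi_c(j))=\mathbf L(i,j)$ for all $i,j$. Let $N_N$ be the number of equivalence classes of pairs under which no 4-cycle candidate is active. Let $\Delta=(2\gamma-3)(2\kappa-3)$, $I=\frac{(\Delta-1)^{\Delta-1}}{\Delta^{\Delta}}$, $II=\frac{27}{256(\gamma\kappa-\gamma-\kappa)}$. If $\frac{2m^2+4m+3}{3(m+1)^3Z}\le\max\{I,II\}$, then $$N_N\ \ge\ \begin{cases}\dfrac{[Z(m+1)]^{\gamma\kappa}\left(1-\frac{2}{\Delta}\right)^{\binom{\gamma}{2}\binom{\kappa}{2}}}{\gamma!\,\kappa!},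 & \text{if } I>II,\\[8pt] \dfrac{[Z(m+1)]^{\gamma\kappa}\left(1-\frac{\gamma\kappa-\gamma-\kappa+1}{4(\gamma\kappa-\gamma-\kappa)}\right)^{\gamma\kappa}}{\gamma!\,\kappa!}, & \text{otherwise.}\end{cases}$$
   Context: Setting: uniform edge spreading (partition matrix $\mathbf P$, memory $m$) and uniform $Z$-lifting (lifting matrix $\mathbf L$) of the all-ones $\gamma\times\kappa$ base matrix; the activation conditions are those for a base-graph 4-cycle to survive spreading and lifting. *)

From HB Require Import structures.
From mathcomp Require Import all_boot all_order all_algebra all_fingroup.
Set Implicit Arguments. Unset Strict Implicit. Unset Printing Implicit Defensive.
Import Order.TTheory GRing.Theory Num.Theory.

(* A pair (P, L): partition matrix with entries in {0..m} and lifting matrix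
   with entries in Z_Z = {0..Z-1} (arithmetic taken mod Z). Indices are
   0-based ordinals ('I_g for [gamma], 'I_k for [kappa]). *)
Definition pairT (g k m Z : nat) : finType :=
  ({ffun 'I_g * 'I_k -> 'I_m.+1} * {ffun 'I_g * 'I_k -> 'I_Z})%type.

Definition active g k m Z (PL : pairT g k m Z) (i1 i2 : 'I_g) (j1 j2 : 'I_k) : bool :=
  let P := PL.1 in let L := PL.2 in
  [&& (i1 < i2)%N, (j1 < j2)%N,
      (P (i1, j1) + P (i2, j2) == P (i1, j2) + P (i2, j1))%N &
      ((L (i1, j1) + L (i2, j2)) %% Z == (L (i1, j2) + L (i2, j1)) %% Z)%N].

Definition no_active g k m Z (PL : pairT g k m Z) : bool :=
  [forall i1 : 'I_g, forall i2 : 'I_g, forall j1 : 'I_k, forall j2 : 'I_k,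
     ~~ active PL i1 i2 j1 j2].

Definition equiv_pair g k m Z (PL PL' : pairT g k m Z) : bool :=
  [exists pr : 'S_g, exists pc : 'S_k,
     [forall i : 'I_g, forall j : 'I_k,
        (PL'.1 (pr i, pc j) == PL.1 (i, j)) && (PL'.2 (pr i, pc j) == PL.2 (i, j))]].

Definition eq_class g k m Z (PL : pairT g k m Z) : {set pairT g k m Z} :=
  [set PL' | equiv_pair PL PL'].

Definition N_N g k m Z : nat :=
  #|[set eq_class PL | PL in [set PL : pairT g k m Z | no_active PL]]|.

Local Open Scope ring_scope.

Definition Delta (g k : nat) : nat := ((2 * g - 3) * (2 * k - 3))%N.

Definition boundI (g k : nat) : rat :=
  ((Delta g k)%:R - 1) ^+ (Delta g k).-1 / (Delta g k)%:R ^+ (Delta g k).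

Definition boundII (g k : nat) : rat :=
  27%:R / (256%:R * (g * k - g - k)%N%:R).

From HB Require Import structures.
From mathcomp Require Import all_boot all_order all_algebra all_fingroup.
From mathcomp Require Import zify ring lra.
Set Implicit Arguments. Unset Strict Implicit. Unset Printing Implicit Defensive.
Import Order.TTheory GRing.Theory Num.Theory.

(** Fill the cells of (P, L) one at a time in row-major order. When cell (i, j)
    (0-based) is filled, every earlier corner (i', j') with i' < i and j' < j
    determines at most one label that would activate the 4-cycle (i', i, j', j),
    so at least Z(m+1) - ij labels remain and there are at least
    prod_(i,j) (Z(m+1) - ij) pairs with no active candidate. An equivalence class
    has at most g! k! elements. It remains to bound each factor from below:
    by Z(m+1)(1 - 2/Delta)^(ij) (a truncated Bonferroni inequality) when I > II,
    using sum_(i,j) ij = C(g,2) C(k,2), and by Z(m+1)(1 - (n+1)/(4n)) with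
    n = gk - g - k otherwise. The hypothesis on m and Z is exactly what these bounds
    need: it gives 3 Z(m+1) >= 2(2 Delta - 1), resp. Z(m+1) >= 4n. *)

Section Greedy.
Variables (T V : finType) (r : T -> nat) (v0 : V).
Variables (forbidden : T -> {ffun T -> V} -> {set V}) (c : T -> nat).
Hypothesis r_inj : injective r.
Hypothesis forbidden_past : forall x (f f' : {ffun T -> V}),
  (forall y, r y < r x -> f y = f' y) -> forbidden x f = forbidden x f'.
Hypothesis card_forbidden : forall x f, #|forbidden x f| <= c x.

Definition admissible_upto t := [set f : {ffun T -> V} |
  [forall x, (t <= r x) ==> (f x == v0)] && [forall x, (r x < t) ==> (f x \notin forbidden x f)]].

Lemma admissible_upto0 : [ffun=> v0] \in admissible_upto 0.
Proof. by rewrite inE; apply/andP; split; apply/forallP=> x; rewrite ?ffunE ?eqxx ?implybT. Qed.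

Lemma admissible_upto_skip t :
  (forall x, r x != t) -> admissible_upto t \subset admissible_upto t.+1.
Proof.
move=> r_neq; apply/subsetP => f; rewrite !inE => /andP [/forallP f0 /forallP fok].
apply/andP; split; apply/forallP => y; apply/implyP => ry.
  by have := f0 y; rewrite ltnW.
have := fok y; rewrite ltn_neqAle r_neq -ltnS ry; exact.
Qed.

Section Extend.
Variables (x0 : T) (t : nat).
Hypothesis r_x0 : r x0 = t.

Let extensions := [set p : {ffun T -> V} * V |
  (p.1 \in admissible_upto t) && (p.2 \notin forbidden x0 p.1)].

Let set_x0 (p : {ffun T -> V} * V) := [ffun y => if y == x0 then p.2 else p.1 y].

Lemma card_extensions : #|admissible_upto t| * (#|V| - c x0) <= #|extensions|.
Proof.
have -> : #|extensions| = \sum_(f in admissible_upto t) #|~: forbidden x0 f|.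
  rewrite -sum1dep_card -(pair_big_dep (fun f => f \in admissible_upto t)
    (fun f v => v \notin forbidden x0 f) (fun _ _ => 1)) /=.
  by apply: eq_bigr => f _; rewrite -sum1_card; apply: eq_bigl => v; rewrite inE.
rewrite -sum_nat_const; apply: leq_sum => f _.
by rewrite cardsCs setCK leq_sub2l ?card_forbidden.
Qed.

Lemma set_x0_inj : {in extensions &, injective set_x0}.
Proof.
move=> [f v] [f' v']; rewrite !inE /= => /andP [/andP [/forallP f0 _] _].
move=> /andP [/andP [/forallP f0' _] _] /ffunP e.
have := e x0; rewrite !ffunE eqxx /= => ->; congr (_, _); apply/ffunP => y.
have := e y; rewrite !ffunE /=; case: eqP => [-> _|//].
by have := f0 x0; have := f0' x0; rewrite r_x0 leqnn => /eqP -> /eqP ->.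
Qed.

Lemma set_x0_admissible : {in extensions, forall p, set_x0 p \in admissible_upto t.+1}.
Proof.
move=> [f v]; rewrite !inE /= => /andP [/andP [/forallP f0 /forallP fok] v_ok].
have set_past y : r y < t -> set_x0 (f, v) y = f y.
  by rewrite ffunE; case: eqP => // -> ; rewrite r_x0 ltnn.
apply/andP; split; apply/forallP => y; apply/implyP => ry.
  rewrite ffunE; case: (y =P x0) => [y_x0|_]; first by move: ry; rewrite y_x0 r_x0 ltnn.
  by have := f0 y; rewrite ltnW.
rewrite (forbidden_past (f' := f)) => [|z rz]; last by apply: set_past; apply: leq_trans rz _.
move: ry; rewrite ltnS leq_eqVlt => /orP [/eqP ry|ry].
  have -> : y = x0 by apply: r_inj; rewrite ry r_x0.
  by rewrite ffunE eqxx.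
by rewrite set_past //; have := fok y; rewrite ry.
Qed.

Lemma card_admissible_upto_extend :
  #|admissible_upto t| * (#|V| - c x0) <= #|admissible_upto t.+1|.
Proof.
apply: (leq_trans card_extensions); rewrite -(card_in_imset set_x0_inj).
by apply/subset_leq_card/subsetP => _ /imsetP [p p_ext ->]; apply: set_x0_admissible.
Qed.

End Extend.

Lemma card_admissible_upto t :
  \prod_(x | r x < t) (#|V| - c x) <= #|admissible_upto t|.
Proof.
elim: t => [|t IH].
  by rewrite big_pred0 // card_gt0; apply/set0Pn; exists [ffun=> v0]; apply: admissible_upto0.
have [x0 /eqP r_x0 | r_neq] := pickP (fun x => r x == t).
  rewrite (bigD1 x0) /= ?r_x0 // mulnC.
  rewrite (eq_bigl (fun x => r x < t)) => [|x].
    exact: leq_trans (leq_mul IH (leqnn _)) (card_admissible_upto_extend r_x0).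
  case: (eqVneq x x0) => [-> | x_x0]; first by rewrite r_x0 ltnn andbF.
  by rewrite andbT ltnS leq_eqVlt -r_x0 (inj_eq r_inj) (negPf x_x0).
rewrite (eq_bigl (fun x => r x < t)) => [|x]; last by rewrite ltnS leq_eqVlt r_neq.
by apply: (leq_trans IH); apply/subset_leq_card/admissible_upto_skip => x; rewrite r_neq.
Qed.
End Greedy.

Section FourCycles.
Variables (g k m Z' : nat).
(* Labels must be inhabited: unfilled cells carry the label (ord0, ord0). *)
Local Notation Z := Z'.+1.
Local Notation cell := ('I_g * 'I_k)%type.
Local Notation label := ('I_m.+1 * 'I_Z)%type.

Definition row_major (x : cell) : nat := x.1 * k + x.2.

Lemma row_major_inj : injective row_major.
Proof.
move=> [a b] [a' b']; rewrite /row_major /= => e.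
have k_gt0 : 0 < k by apply: leq_ltn_trans (ltn_ord b).
have ea : a = a' :> nat.
  by have := congr1 (divn^~ k) e; rewrite /= !divnMDl // !divn_small ?addn0.
by move: e; rewrite ea => /addnI eb; congr (_, _); apply: val_inj.
Qed.

Lemma row_major_lt (x : cell) : row_major x < g * k.
Proof. by case: x => [a b]; rewrite /row_major /=; have := ltn_ord a; have := ltn_ord b; nia. Qed.

Definition closes_cycle (f : {ffun cell -> label}) (x : cell) (v : label) (p : cell) :=
  [&& p.1 < x.1, p.2 < x.2, v.1 + (f p).1 == (f (p.1, x.2)).1 + (f (x.1, p.2)).1 &
      (v.2 + (f p).2) %% Z == ((f (p.1, x.2)).2 + (f (x.1, p.2)).2) %% Z].

Definition cycle_closing (x : cell) (f : {ffun cell -> label}) : {set label} :=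
  [set v | [exists p, closes_cycle f x v p]].

Lemma cycle_closing_past x (f f' : {ffun cell -> label}) :
  (forall y, row_major y < row_major x -> f y = f' y) -> cycle_closing x f = cycle_closing x f'.
Proof.
move=> f_f'; apply/setP => v; rewrite !inE; apply: eq_existsb => p.
rewrite /closes_cycle; case: ltnP => //= p1; case: ltnP => //= p2.
rewrite !(f_f' p) ?(f_f' (p.1, x.2)) ?(f_f' (x.1, p.2)) // /row_major /=.
all: have := ltn_ord x.2; nia.
Qed.

Lemma closes_cycle_uniq f x v w p :
  closes_cycle f x v p -> closes_cycle f x w p -> v = w.
Proof.
case/and4P=> _ _ /eqP v1 /eqP v2 /and4P [_ _ /eqP w1 /eqP w2].
case: v w v1 v2 w1 w2 => [v1 v2] [w1 w2] /= <- e2 /eqP + /eqP.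
rewrite eqn_add2r -e2 eqn_modDr !modn_small // => /eqP e1 /eqP e2'.
by congr (_, _); apply: val_inj.
Qed.

Lemma card_cycle_closing x f : #|cycle_closing x f| <= x.1 * x.2.
Proof.
pose witness v := odflt x [pick p | closes_cycle f x v p].
have witnessP v : v \in cycle_closing x f -> closes_cycle f x v (witness v).
  by rewrite inE /witness => /existsP [p p_v]; case: pickP => [//|/(_ p)]; rewrite p_v.
have witness_inj : {in cycle_closing x f &, injective witness}.
  by move=> v w v_in w_in e; apply: closes_cycle_uniq (witnessP v v_in) _; rewrite e witnessP.
pose below (q : 'I_x.1 * 'I_x.2) : cell :=
  (widen_ord (ltnW (ltn_ord x.1)) q.1, widen_ord (ltnW (ltn_ord x.2)) q.2).
rewrite -(card_in_imset witness_inj); apply: leq_trans (_ : #|below @: setT| <= _).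
  apply/subset_leq_card/subsetP => _ /imsetP [v /witnessP /and4P [p1 p2 _ _] ->].
  apply/imsetP; exists (Ordinal p1, Ordinal p2) => //.
  by move: p1 p2; case: (witness v) => a b p1 p2; congr (_, _); apply: val_inj.
by apply: leq_trans (leq_imset_card _ _) _; rewrite cardsT card_prod !card_ord.
Qed.

Definition pair_of_labels (f : {ffun cell -> label}) : pairT g k m Z :=
  ([ffun x => (f x).1], [ffun x => (f x).2]).

Lemma pair_of_labels_inj : injective pair_of_labels.
Proof.
move=> f f' [/ffunP e1 /ffunP e2]; apply/ffunP => x.
by have := e1 x; have := e2 x; rewrite !ffunE; case: (f x) (f' x) => [? ?] [? ?] /= -> ->.
Qed.

Lemma admissible_no_active f :
  f \in admissible_upto row_major (ord0, ord0) cycle_closing (g * k) ->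
  no_active (pair_of_labels f).
Proof.
rewrite inE => /andP [_ /forallP f_ok].
apply/forallP => i1; apply/forallP => i2; apply/forallP => j1; apply/forallP => j2.
apply/negP => /and4P [i12 j12 e1 e2].
move: (f_ok (i2, j2)); rewrite row_major_lt /= => /negP; apply; rewrite inE.
apply/existsP; exists (i1, j1); move: e1 e2; rewrite /closes_cycle /= !ffunE i12 j12.
by rewrite addnC => -> ; rewrite addnC.
Qed.

Lemma card_no_active_ge :
  \prod_(x : cell) (Z * m.+1 - x.1 * x.2) <= #|[set PL : pairT g k m Z | no_active PL]|.
Proof.
have := card_admissible_upto (ord0, ord0) row_major_inj cycle_closing_past
  (c := fun x : cell => x.1 * x.2) card_cycle_closing (g * k).
rewrite card_prod !card_ord [m.+1 * _]mulnC (eq_bigl xpredT) => [|x]; last by rewrite row_major_lt.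
move/leq_trans; apply; rewrite -(card_imset _ pair_of_labels_inj).
by apply/subset_leq_card/subsetP => _ /imsetP [f f_ok ->]; rewrite inE admissible_no_active.
Qed.

End FourCycles.

Section Classes.
Variables (g k m Z : nat).

Definition permute_pair (p : {perm 'I_g} * {perm 'I_k}) (PL : pairT g k m Z) : pairT g k m Z :=
  let move x := ((p.1^-1)%g x.1, (p.2^-1)%g x.2) in
  ([ffun x => PL.1 (move x)], [ffun x => PL.2 (move x)]).

Lemma card_eq_class (PL : pairT g k m Z) : #|eq_class PL| <= g`! * k`!.
Proof.
apply: (@leq_trans #|[set permute_pair p PL | p in setT]|).
  apply/subset_leq_card/subsetP => -[P' L'].
  rewrite inE => /existsP [pr /existsP [pc /forallP PL']].
  apply/imsetP; exists (pr, pc) => //; congr (_, _); apply/ffunP => -[a b]; rewrite ffunE /=;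
  have /forallP /(_ (pc^-1 b)%g) /andP [/eqP e1 /eqP e2] := PL' (pr^-1 a)%g;
  by rewrite !permKV in e1 e2; rewrite -?e1 -?e2.
by apply: leq_trans (leq_imset_card _ _) _; rewrite cardsT card_prod !card_Sn.
Qed.

Lemma eq_class_refl (PL : pairT g k m Z) : PL \in eq_class PL.
Proof.
rewrite inE; apply/existsP; exists 1%g; apply/existsP; exists 1%g.
by apply/forallP => i; apply/forallP => j; rewrite !perm1 !eqxx.
Qed.

Lemma card_no_active_le :
  #|[set PL : pairT g k m Z | no_active PL]| <= N_N g k m Z * (g`! * k`!).
Proof.
set G := [set PL | no_active PL]; rewrite /N_N -/G -sum1_card.
rewrite (partition_big (@eq_class g k m Z) (mem (@eq_class g k m Z @: G))) => [|PL PL_G].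
  2: exact: imset_f.
rewrite -sum_nat_const; apply: leq_sum => _ /imsetP [PL0 _ ->].
apply: leq_trans (card_eq_class PL0); rewrite sum1dep_card.
by apply/subset_leq_card/subsetP => PL; rewrite inE => /andP [_ /eqP <-]; apply: eq_class_refl.
Qed.

End Classes.

Lemma bernoulli_nat a n : (a + n) * a ^ n <= a * (a + 1) ^ n.
Proof.
elim: n => [|n IH]; first by rewrite addn0 !expn0.
rewrite !expnS; move: IH; move: (a ^ n) ((a + 1) ^ n) => p q IH; nia.
Qed.

Lemma expn_succ_ge a : (2 * a + 1) * a ^ a <= (a + 1) ^ (a + 1).
Proof.
case: a => [//|a]; have := bernoulli_nat a.+1 a.+1.
rewrite expnD expn1; move: (a.+1 ^ a.+1) ((a.+1 + 1) ^ a.+1) => p q; nia.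
Qed.

Lemma cell_product_le g k (x : 'I_g * 'I_k) : x.1 * x.2 <= (g - 1) * (k - 1).
Proof. by case: x => [[i ?] [j ?]] /=; apply: leq_mul; lia. Qed.

Lemma sum_cell_products g k : \sum_(x : 'I_g * 'I_k) x.1 * x.2 = 'C(g, 2) * 'C(k, 2).
Proof.
rewrite -(pair_bigA _ (fun (i : 'I_g) (j : 'I_k) => i * j)) /=.
under eq_bigr do rewrite -big_distrr /=.
by rewrite -big_distrl /= -!(big_mkord xpredT (fun i => i)) !bin2_sum.
Qed.

(* With g = a + 2 and k = b + 2, Delta + 1 - (g - 1)(k - 1) = 3ab + a + b + 1
   and 3 Delta^2 <= 4 (2 Delta - 1) (3ab + a + b + 1). *)
Lemma Delta_sq_le g k N c : 2 <= g -> 2 <= k ->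
  2 * (2 * Delta g k - 1) <= 3 * N -> c <= (g - 1) * (k - 1) ->
  Delta g k ^ 2 <= 2 * N * (Delta g k + 1 - c).
Proof.
rewrite /Delta => g2 k2; have [a ->] : exists a, g = a + 2 by exists (g - 2); lia.
have [b ->] : exists b, k = b + 2 by exists (k - 2); lia.
have -> : (2 * (a + 2) - 3) * (2 * (b + 2) - 3) = 4 * (a * b) + 2 * a + 2 * b + 1 by nia.
have -> : (a + 2 - 1) * (b + 2 - 1) = a * b + a + b + 1 by nia.
move: (a * b) => p hN hc.
have : 3 * (4 * p + 2 * a + 2 * b + 1) ^ 2 <= 6 * N * (3 * p + a + b + 1) by nia.
nia.
Qed.

Local Open Scope ring_scope.

Lemma natrB_ge (R : numDomainType) (m n : nat) : m%:R - n%:R <= (m - n)%:R :> R.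
Proof.
have [/natrB -> // | /ltnW n_ge] := leqP n m.
by rewrite (eqP n_ge) subr_le0 ler_nat.
Qed.

Lemma ler_frac_nat (R : numFieldType) (a b c d : nat) : (0 < b)%N -> (0 < d)%N ->
  (a%:R / b%:R <= c%:R / d%:R :> R) = (a * d <= c * b)%N.
Proof.
move=> b_gt0 d_gt0.
by rewrite ler_pdivrMr ?ltr0n // mulrAC ler_pdivlMr ?ltr0n // -!natrM ler_nat.
Qed.

Lemma threshold_ge (m Z : nat) : (0 < Z)%N ->
  2%:R / (3 * (Z * m.+1))%N%:R <= (2 * m ^ 2 + 4 * m + 3)%N%:R / (3 * m.+1 ^ 3 * Z)%N%:R :> rat.
Proof. by move=> Z_gt0; rewrite ler_frac_nat; nia. Qed.

(* boundI <= 1 / (2 Delta - 1), since (2a + 1) a^a <= (a + 1)^(a + 1). *)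
Lemma boundI_threshold g k N : (0 < N)%N -> (2 <= Delta g k)%N ->
  2%:R / (3 * N)%N%:R <= boundI g k -> (2 * (2 * Delta g k - 1) <= 3 * N)%N.
Proof.
rewrite /boundI; set D := Delta g k => N_gt0 D_ge2.
have [a D_a] : exists a, D = a.+1 by exists D.-1; lia.
rewrite D_a /=; have -> : a.+1%:R - 1 = a%:R :> rat by rewrite -natr1 addrK.
rewrite -!natrX ler_frac_nat ?expn_gt0 ?muln_gt0 // => thr.
have a_gt0 : (0 < a ^ a)%N by rewrite expn_gt0; apply/orP; left; lia.
rewrite -(leq_pmul2r a_gt0); apply: leq_trans (_ : 2 * a.+1 ^ a.+1 <= _)%N.
  by have := expn_succ_ge a; rewrite addn1; lia.
by rewrite [(3 * N * _)%N]mulnC.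
Qed.

Lemma boundII_threshold g k N : (0 < N)%N -> (0 < g * k - g - k)%N ->
  2%:R / (3 * N)%N%:R <= boundII g k -> (4 * (g * k - g - k) <= N)%N.
Proof.
rewrite /boundII -natrM => N_gt0 n_gt0; rewrite ler_frac_nat ?muln_gt0 //; lia.
Qed.

Lemma expr1B_le_bonferroni (R : realDomainType) (x : R) c : 0 <= x -> x <= 1 ->
  (1 - x) ^+ c <= 1 - c%:R * x + 'C(c, 2)%:R * x ^+ 2.
Proof.
move=> x_ge0 x_le1; elim: c => [|c IH]; first by rewrite expr0 mul0r subr0 bin0n mul0r addr0.
rewrite exprS binS bin1 natrD -natr1.
apply: le_trans (ler_wpM2l (_ : 0 <= 1 - x) IH) _; first by rewrite subr_ge0.
have : 0 <= 'C(c, 2)%:R * x ^+ 3 by rewrite mulr_ge0 ?exprn_ge0.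
rewrite !exprS expr0; nra.
Qed.

Lemma natr_bin2_mul2 (R : pzRingType) c : 'C(c, 2)%:R * 2 = c%:R * (c%:R - 1) :> R.
Proof.
case: c => [|c]; first by rewrite bin0n !(mul0r, mul0rn).
have e : ('C(c.+1, 2) * 2 = c.+1 * c)%N by rewrite mulnC (mul_bin_left c.+1 1) bin1 subn1 mulnC.
by rewrite -[in X in _ = _ * X]natr1 addrK -(natrM R _ 2) e natrM.
Qed.

Lemma cell_bound_I (R : realFieldType) (N D c : nat) : (2 <= D)%N ->
  (D ^ 2 <= 2 * N * (D + 1 - c))%N -> N%:R * (1 - 2%:R / D%:R) ^+ c <= (N - c)%:R :> R.
Proof.
move=> D_ge2 hyp; have c_le : (c <= D + 1)%N by move: hyp; case: leqP => // ?; nia.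
set d : R := D%:R; have d_gt0 : 0 < d by rewrite ltr0n; lia.
set x := 2%:R / d.
have x_ge0 : 0 <= x by rewrite divr_ge0 // ltW.
have x_le1 : x <= 1 by rewrite ler_pdivrMr // mul1r ler_nat.
have hypR : d ^+ 2 <= 2 * N%:R * (d + 1 - c%:R).
  by move: hyp; rewrite -(ler_nat R) !natrM natrB // natrD expr2.
apply: le_trans (natrB_ge _ N c).
apply: le_trans (ler_wpM2l (ler0n _ N) (expr1B_le_bonferroni c x_ge0 x_le1)) _.
(* After clearing the denominator d^2, the goal is c times [hypR]. *)
rewrite -(ler_pM2r (exprn_gt0 2 d_gt0)).
have -> : N%:R * (1 - c%:R * x + 'C(c, 2)%:R * x ^+ 2) * d ^+ 2
    = N%:R * d ^+ 2 - 2 * N%:R * c%:R * d + 2 * N%:R * ('C(c, 2)%:R * 2).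
  by rewrite /x; field; rewrite gt_eqF.
have : 0 <= c%:R :> R by [].
rewrite natr_bin2_mul2; nra.
Qed.

Lemma cell_bound_II (R : realFieldType) (N n c : nat) : (1 <= n)%N -> (4 * n <= N)%N ->
  (c <= n + 1)%N -> N%:R * (1 - (n + 1)%:R / (4 * n)%:R) <= (N - c)%:R :> R.
Proof.
move=> n_ge1 n_N c_le; apply: le_trans (natrB_ge _ N c).
have n4_gt0 : 0 < (4 * n)%:R :> R by rewrite ltr0n; lia.
have : (c * (4 * n) <= N * (n + 1))%N by nia.
rewrite -(ler_nat R) !natrM => c_N.
by rewrite mulrBr mulr1 lerD2l lerN2 mulrA ler_pdivlMr // -natrM.
Qed.

Lemma prod_cells_const (R : pzSemiRingType) g k (y : R) :
  \prod_(x : 'I_g * 'I_k) y = y ^+ (g * k).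
Proof. by rewrite prodr_const card_prod !card_ord. Qed.

Lemma N_N_ge_weighted g k m Z (w : 'I_g * 'I_k -> rat) : (0 < Z)%N ->
  (forall x, 0 <= w x) -> (forall x, (Z * m.+1)%:R * w x <= (Z * m.+1 - x.1 * x.2)%:R) ->
  (Z * m.+1)%:R ^+ (g * k) * \prod_x w x / (g`! * k`!)%N%:R <= (N_N g k m Z)%:R.
Proof.
case: Z => [//|Z] _ w_ge0 w_le.
rewrite ler_pdivrMr ?ltr0n ?muln_gt0 ?fact_gt0 // -natrM.
have := card_no_active_le g k m Z.+1; rewrite -(ler_nat rat) => le_N_N.
have := card_no_active_ge g k m Z; rewrite -(ler_nat rat) natr_prod => le_good.
apply: le_trans le_N_N; apply: le_trans le_good.
rewrite -prod_cells_const -big_split /=.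
by apply: ler_prod => x _; rewrite mulr_ge0 ?w_le.
Qed.

Theorem corollary2 (m Z g k : nat) :
  (1 <= Z)%N -> (2 <= g)%N -> (2 <= k)%N -> (g + k < g * k)%N ->
  (2 * m ^ 2 + 4 * m + 3)%N%:R / (3 * m.+1 ^ 3 * Z)%N%:R
    <= Num.max (boundI g k) (boundII g k) ->
  (if boundII g k < boundI g k then
     (Z * m.+1)%N%:R ^+ (g * k) * (1 - 2%:R / (Delta g k)%:R) ^+ ('C(g, 2) * 'C(k, 2))
       / (g`! * k`!)%N%:R
   else
     (Z * m.+1)%N%:R ^+ (g * k)
       * (1 - (g * k - g - k + 1)%N%:R / (4 * (g * k - g - k))%N%:R) ^+ (g * k)
       / (g`! * k`!)%N%:R)
  <= (N_N g k m Z)%:R :> rat.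
Proof.
move=> Z_gt0 g_ge2 k_ge2 gk_gt.
have N_gt0 : (0 < Z * m.+1)%N by rewrite muln_gt0 Z_gt0.
case: (ltP (boundII g k) (boundI g k)) => [_ | _] /(le_trans (threshold_ge m Z_gt0)) thr.
  have D_ge2 : (2 <= Delta g k)%N by rewrite /Delta; nia.
  have N_ge := boundI_threshold N_gt0 D_ge2 thr.
  rewrite -sum_cell_products -prodrXr.
  apply: N_N_ge_weighted Z_gt0 _ _ => x.
    by apply: exprn_ge0; rewrite subr_ge0 ler_pdivrMr ?ltr0n ?mul1r ?ler_nat; lia.
  apply: cell_bound_I D_ge2 _; apply: Delta_sq_le g_ge2 k_ge2 N_ge (cell_product_le x).
have n_gt0 : (0 < g * k - g - k)%N by lia.
have N_ge := boundII_threshold N_gt0 n_gt0 thr.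
rewrite -[(1 - _) ^+ _]prod_cells_const; apply: N_N_ge_weighted Z_gt0 _ _ => x.
  by rewrite subr_ge0 ler_pdivrMr ?ltr0n ?mul1r ?ler_nat; lia.
by apply: cell_bound_II n_gt0 N_ge _; have := cell_product_le x; lia.
Qed.
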